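(* Let $g:\mathbb{C}\to\mathbb{C}$ be a harmonic map (real and imaginary parts harmonic) such that $\mathcal{D}(g(\mathbb{C}))$ contains no pair of antipodal points. Then there exist $\theta\in[0,2\pi)$, $\rho>0$ and $a>1$ such that, writing $f=e^{i\theta}g$ and $\mathcal{R}_f=f(\mathbb{C})$, $$\mathcal{R}_f\subset\overline{D}(0,\rho)\cup\Big(\{u+iv:\ |v|\le a|u|\}\setminus\{u+iv:\ |v|\le -\tfrac{1}{a}u\}\Big).$$
   Context: $\partial\mathbb{D}$ is the unit circle. For $\mathcal{R}\subset\mathbb{C}$, $e^{i\theta}\in\partial\mathbb{D}$ is an asymptotic direction of $\mathcal{R}$ if there exist $w_n\in\mathcal{R}$ and $\varepsilon_n>0$, $\varepsilon_n\to0$, with $\varepsilon_n w_n\to e^{i\theta}$; $\mathcal{D}(\mathcal{R})$ is the set of asymptotic directions. *)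

From Stdlib Require Import Reals.
From Coquelicot Require Import Coquelicot.
Open Scope R_scope.

(* Partial derivatives of u : R -> R -> R  (u x y = u(x + i y)). *)
Definition dx (u : R -> R -> R) (x y : R) : R := Derive (fun s => u s y) x.
Definition dy (u : R -> R -> R) (x y : R) : R := Derive (fun t => u x t) y.

Definition cont2 (f : R -> R -> R) (x y : R) : Prop :=
  continuous (fun p : R * R => f (fst p) (snd p)) (x, y).

Definition harmonic (u : R -> R -> R) : Prop :=
  forall x y : R,
    ex_derive (fun s => u s y) x /\ ex_derive (fun t => u x t) y /\
    ex_derive (fun s => dx u s y) x /\ ex_derive (fun t => dx u x t) y /\
    ex_derive (fun s => dy u s y) x /\ ex_derive (fun t => dy u x t) y /\
    cont2 u x y /\ cont2 (dx u) x y /\ cont2 (dy u) x y /\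
    cont2 (dx (dx u)) x y /\ cont2 (dy (dx u)) x y /\
    cont2 (dx (dy u)) x y /\ cont2 (dy (dy u)) x y /\
    dx (dx u) x y + dy (dy u) x y = 0.

Definition harmonic_map (g : C -> C) : Prop :=
  harmonic (fun x y => Re (g (x, y))) /\ harmonic (fun x y => Im (g (x, y))).

Definition asymptotic_direction (S : C -> Prop) (z : C) : Prop :=
  Cmod z = 1 /\
  exists (w : nat -> C) (eps : nat -> R),
    (forall n, S (w n)) /\ (forall n, 0 < eps n) /\
    is_lim_seq eps 0 /\
    filterlim (fun n => Cmult (RtoC (eps n)) (w n)) eventually (locally z).

Definition image (g : C -> C) : C -> Prop := fun w => exists z, g z = w.

Definition cexpi (theta : R) : C := (cos theta, sin theta).

(* The set of asymptotic directions of a set S is closed, so the set of non-directions is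
   open in the angle.  If no two directions are antipodal, connectedness of the circle
   yields an antipodal pair of non-directions t, t + PI, and one of t + PI/2, t - PI/2
   is a non-direction too.  Rotate so that these three become i, -i and -1: outside a
   large disc, the points of the rotated set are then uniformly far, in angle, from
   these three directions, which is exactly the cone condition. *)

From Stdlib Require Import Reals Lra Classical ClassicalEpsilon.
From Coquelicot Require Import Coquelicot.
Open Scope R_scope.

(* The epsilon-delta form of [asymptotic_direction] (equivalent to it when [Cmod z = 1]). *)
Definition approx_direction (S : C -> Prop) (z : C) : Prop :=
  forall d h : R, 0 < d -> 0 < h ->
    exists w e, S w /\ 0 < e < h /\ Cmod (RtoC e * w - z)%C < d.

Lemma eventually_inv_succ_lt (e : R) :
  0 < e -> eventually (fun n : nat => / (INR n + 1) < e).
Proof.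
  intros He. destruct (nfloor_ex (/ e)) as [N HN].
  { left; apply Rinv_0_lt_compat; lra. }
  exists N. intros n Hn. apply le_INR in Hn.
  rewrite <- (Rinv_inv e). apply Rinv_lt_contravar.
  - apply Rmult_lt_0_compat; [apply Rinv_0_lt_compat; lra | pose proof (pos_INR n); lra].
  - lra.
Qed.

Lemma asymptotic_direction_of_approx (S : C -> Prop) (z : C) :
  Cmod z = 1 -> approx_direction S z -> asymptotic_direction S z.
Proof.
  intros Hz H. split; [exact Hz |].
  assert (Hseq : forall n : nat, exists p : C * R,
    S (fst p) /\ 0 < snd p < / (INR n + 1) /\
    Cmod (RtoC (snd p) * fst p - z)%C < / (INR n + 1)).
  { intros n.
    assert (Hn : 0 < / (INR n + 1)) by (apply Rinv_0_lt_compat; pose proof (pos_INR n); lra).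
    destruct (H _ _ Hn Hn) as (w & e & Hw & He & Hc). exists (w, e). auto. }
  destruct (choice _ Hseq) as [p Hp].
  exists (fun n => fst (p n)), (fun n => snd (p n)).
  split; [| split; [| split]].
  - intros n. apply Hp.
  - intros n. apply Hp.
  - apply is_lim_seq_spec. intros eps.
    apply (filter_imp (fun n : nat => / (INR n + 1) < eps));
      [| exact (eventually_inv_succ_lt eps (cond_pos eps))].
    intros n Hn. destruct (Hp n) as (_ & He & _).
    rewrite Rminus_0_r, Rabs_pos_eq; lra.
  - apply filterlim_locally. intros eps.
    apply (filter_imp (fun n : nat => / (INR n + 1) < eps));
      [| exact (eventually_inv_succ_lt eps (cond_pos eps))].
    intros n Hn. apply C_NormedModule_mixin_compat1.
    destruct (Hp n) as (_ & _ & Hc). exact (Rlt_trans _ _ _ Hc Hn).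
Qed.

Lemma cexpi_add (s t : R) : cexpi (s + t) = (cexpi s * cexpi t)%C.
Proof.
  unfold cexpi, Cmult; simpl. rewrite cos_plus, sin_plus. f_equal; ring.
Qed.

Lemma Cmod_cexpi (t : R) : Cmod (cexpi t) = 1.
Proof.
  unfold Cmod, cexpi; simpl. transitivity (sqrt 1); [f_equal | apply sqrt_1].
  pose proof (sin2_cos2 t) as H. unfold Rsqr in H. lra.
Qed.

Lemma locally_cexpi_close (t e : R) :
  0 < e -> locally t (fun s => Cmod (cexpi s - cexpi t)%C < e).
Proof.
  intros He.
  assert (Hcs : forall f : R -> R, continuity_pt f t ->
            locally t (fun s => Rabs (f s - f t) < e / 2)).
  { intros f Hf. apply continuity_pt_filterlim in Hf.
    exact (proj1 (filterlim_locally _ _) Hf (mkposreal (e / 2) ltac:(lra))). }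
  apply (filter_imp (fun s => Rabs (cos s - cos t) < e / 2 /\ Rabs (sin s - sin t) < e / 2)).
  - intros s [Hc Hs]. eapply Rle_lt_trans; [apply Cmod_2Rmax |]. simpl.
    set (M := Rmax (Rabs (cos s + - cos t)) (Rabs (sin s + - sin t))).
    assert (HM : 0 <= M < e / 2).
    { split; [eapply Rle_trans; [apply Rabs_pos | apply Rmax_l] |].
      apply Rmax_lub_lt; assumption. }
    assert (Hsqrt2 : 0 <= sqrt 2 < 2).
    { split; [apply sqrt_pos |].
      rewrite <- (sqrt_square 2) at 2 by lra. apply sqrt_lt_1; lra. }
    nra.
  - apply filter_and; apply Hcs; [apply continuity_cos | apply continuity_sin].
Qed.

Lemma not_approx_direction_locally (S : C -> Prop) (t : R) :
  ~ approx_direction S (cexpi t) -> locally t (fun s => ~ approx_direction S (cexpi s)).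
Proof.
  intros Ht. apply NNPP. intros Hnear. apply Ht. intros d h Hd Hh.
  assert (Hs : exists s, Cmod (cexpi s - cexpi t)%C < d / 2 /\ approx_direction S (cexpi s)).
  { apply NNPP. intros Hno. apply Hnear.
    apply (filter_imp _ _ (fun s Hs HQ => Hno (ex_intro _ s (conj Hs HQ)))).
    apply locally_cexpi_close. lra. }
  destruct Hs as (s & Hst & Hs).
  destruct (Hs (d / 2) h ltac:(lra) Hh) as (w & e & Hw & He & Hc).
  exists w, e. split; [exact Hw | split; [exact He |]].
  replace (RtoC e * w - cexpi t)%C with ((RtoC e * w - cexpi s) + (cexpi s - cexpi t))%C by ring.
  eapply Rle_lt_trans; [apply Cmod_triangle | lra].
Qed.

Lemma locally_constant_const (Q : R -> Prop) :
  (forall t, locally t (fun s => Q s <-> Q t)) -> forall a b, Q a -> Q b.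
Proof.
  intros Hlc.
  (* A continuous function with values in {-1, 1} cannot change sign, by the IVT. *)
  set (f := fun t => if excluded_middle_informative (Q t) then 1 else -1).
  assert (Hf : continuity f).
  { intros t. apply continuity_pt_filterlim.
    apply (filterlim_ext_loc (fun _ => f t)); [| apply filterlim_const].
    apply (filter_imp (fun s => Q s <-> Q t)); [| apply Hlc].
    intros s Hs. unfold f.
    destruct (excluded_middle_informative (Q s)), (excluded_middle_informative (Q t));
      tauto. }
  assert (Hf_ne0 : forall t, f t <> 0)
    by (intros t; unfold f; destruct (excluded_middle_informative (Q t)); lra).
  assert (Hsign : forall a b, ~ (Q a <-> Q b) -> f a * f b <= 0).
  { intros a b Hab. unfold f.
    destruct (excluded_middle_informative (Q a)), (excluded_middle_informative (Q b));
      tauto || lra. }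
  intros a b Ha. apply NNPP. intros Hb.
  destruct (Rle_dec a b) as [Hle | Hlt].
  - destruct (IVT_cor f a b Hf Hle (Hsign a b ltac:(tauto))) as (z & _ & Hz).
    exact (Hf_ne0 z Hz).
  - destruct (IVT_cor f b a Hf ltac:(lra) (Hsign b a ltac:(tauto))) as (z & _ & Hz).
    exact (Hf_ne0 z Hz).
Qed.

Lemma locally_shift (P : R -> Prop) (t c : R) :
  locally (t + c) P -> locally t (fun s => P (s + c)).
Proof.
  intros [eps H]. exists eps. intros s Hs. apply H.
  unfold ball in *; simpl in *. unfold AbsRing_ball, minus, plus, opp, abs in *; simpl in *.
  replace (s + c + - (t + c)) with (s + - t) by ring. exact Hs.
Qed.

Lemma exists_avoided_antipodal_pair (Q : R -> Prop) :
  (forall t, ~ Q t -> locally t (fun s => ~ Q s)) ->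
  (forall t, ~ (Q t /\ Q (t + PI))) ->
  exists t, ~ Q t /\ ~ Q (t + PI).
Proof.
  (* Otherwise [Q] would be the complement of its own translate by [PI], hence clopen. *)
  intros Hopen Hanti. apply NNPP. intros Hno.
  assert (Hcompl : forall t, Q t <-> ~ Q (t + PI)).
  { intros t. specialize (Hanti t). split; [tauto |].
    intros Hpi. apply NNPP. intros Ht. apply Hno. exists t. tauto. }
  assert (Hlc : forall t, locally t (fun s => Q s <-> Q t)).
  { intros t. destruct (classic (Q t)) as [Ht | Ht].
    - apply (filter_imp (fun s => ~ Q (s + PI))).
      + intros s Hs. rewrite Hcompl. tauto.
      + apply (locally_shift (fun s => ~ Q s)), Hopen, Hcompl, Ht.
    - apply (filter_imp (fun s => ~ Q s)); [tauto | apply Hopen, Ht]. }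
  pose proof (locally_constant_const Q Hlc) as Hconst.
  specialize (Hcompl 0). rewrite Rplus_0_l in Hcompl.
  pose proof (Hconst 0 PI). pose proof (Hconst PI 0). tauto.
Qed.

Lemma exists_avoided_triple (Q : R -> Prop) :
  (forall t, Q (t + 2 * PI) <-> Q t) ->
  (forall t, ~ Q t -> locally t (fun s => ~ Q s)) ->
  (forall t, ~ (Q t /\ Q (t + PI))) ->
  exists t, ~ Q t /\ ~ Q (t + PI) /\ ~ Q (t + PI / 2).
Proof.
  intros Hper Hopen Hanti.
  destruct (exists_avoided_antipodal_pair Q Hopen Hanti) as (t & Ht & Htpi).
  destruct (classic (Q (t + PI / 2))) as [Hhalf | Hhalf].
  - exists (t + PI). split; [exact Htpi | split].
    + replace (t + PI + PI) with (t + 2 * PI) by ring. rewrite Hper. exact Ht.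
    + replace (t + PI + PI / 2) with (t + PI / 2 + PI) by field.
      intros H. exact (Hanti _ (conj Hhalf H)).
  - exists t. auto.
Qed.

Definition cone_region (a : R) (w : C) : Prop :=
  Rabs (Im w) <= a * Rabs (Re w) /\ ~ (Rabs (Im w) <= - (1 / a) * Re w).

Lemma cone_region_scale (a r : R) (w : C) :
  0 < r -> cone_region a w -> cone_region a (RtoC r * w)%C.
Proof.
  intros Hr [Hcone Hleft]. unfold cone_region.
  rewrite re_scal_l, im_scal_l, !Rabs_mult, (Rabs_pos_eq r) by lra.
  split.
  - nra.
  - intros H. apply Hleft. apply (Rmult_le_reg_l r); [exact Hr |].
    replace (r * (- (1 / a) * Re w)) with (- (1 / a) * (r * Re w)) by ring. exact H.
Qed.

Lemma le_Cmod_sqr (d : R) (z : C) :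
  0 <= d -> d <= Cmod z -> d * d <= Re z * Re z + Im z * Im z.
Proof.
  intros Hd Hz. pose proof (Cmod2_alt z) as H. simpl in H. rewrite !Rmult_1_r in H.
  rewrite <- H. apply Rmult_le_compat; lra.
Qed.

Lemma cone_region_of_unit (a d : R) (u : C) :
  Cmod u = 1 -> 0 < d -> 2 <= a * d ->
  d <= Cmod (u - Ci)%C -> d <= Cmod (u + Ci)%C -> d <= Cmod (u + 1)%C ->
  cone_region a u.
Proof.
  intros Hu Hd Had Hi Hmi Hm1.
  apply le_Cmod_sqr in Hi, Hmi, Hm1; try lra.
  assert (Hxy : Re u * Re u + Im u * Im u = 1).
  { pose proof (Cmod2_alt u) as H. simpl in H. rewrite Hu in H. lra. }
  destruct u as [x y]. unfold cone_region. simpl in *.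
  assert (Hyy : y * y = Rabs y * Rabs y)
    by (rewrite <- Rabs_mult; symmetry; apply Rabs_pos_eq; nra).
  assert (Hy : d * d <= 2 - 2 * Rabs y)
    by (destruct (Rle_or_lt 0 y); [rewrite Rabs_pos_eq | rewrite Rabs_left]; nra).
  assert (Hx : d * d <= 2 + 2 * x) by nra.
  assert (Hdd : 4 <= a * a * (d * d)) by nra.
  pose proof (Rabs_pos y) as Hy0.
  split.
  - assert (Ha : 0 <= a) by nra.
    rewrite <- (Rabs_pos_eq a), <- Rabs_mult by exact Ha.
    apply Rsqr_le_abs_0. unfold Rsqr.
    assert (Hx2 : d * d / 2 <= x * x) by nra.
    nra.
  - (* In the left cone, [a^2 (1 - m^2) <= m^2] with [m = 1 - d^2/2], which [a d >= 2] forbids. *)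
    intros Hleft.
    assert (Ha : 0 < a) by nra.
    assert (Hay : a * Rabs y <= - x).
    { apply (Rmult_le_compat_l a) in Hleft; [| lra].
      replace (a * (- (1 / a) * x)) with (- x) in Hleft by (field; lra). exact Hleft. }
    set (m := 1 - d * d / 2).
    assert (Hm : 0 <= - x <= m) by (unfold m; nra).
    assert (Hay2 : a * a * (y * y) <= m * m).
    { rewrite Hyy. assert (0 <= a * Rabs y) by nra.
      apply Rle_trans with ((a * Rabs y) * (a * Rabs y)); [nra |].
      apply Rmult_le_compat; lra. }
    assert (Hm2 : d * d / 2 <= 1 - m * m) by (unfold m in *; nra).
    assert (Hx2 : x * x <= m * m) by nra.
    assert (Hbound : a * a * (1 - m * m) <= m * m) by nra.
    assert (m * m <= 1) by nra.
    nra.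
Qed.

Lemma not_approx_direction_far (S : C -> Prop) (z : C) :
  ~ approx_direction S z ->
  exists d h, 0 < d /\ 0 < h /\
    forall w e, S w -> 0 < e < h -> d <= Cmod (RtoC e * w - z)%C.
Proof.
  intros Hz. apply NNPP. intros Hno. apply Hz. intros d h Hd Hh.
  apply NNPP. intros Hnone. apply Hno. exists d, h. split; [exact Hd | split; [exact Hh |]].
  intros w e Hw He. apply Rnot_lt_le. intros Hc. apply Hnone. exists w, e. auto.
Qed.

Lemma cone_region_outside_disc (S : C -> Prop) (a d h : R) :
  0 < d -> 0 < h -> 2 <= a * d ->
  (forall w e, S w -> 0 < e < h ->
     d <= Cmod (RtoC e * w - Ci)%C /\ d <= Cmod (RtoC e * w + Ci)%C /\
     d <= Cmod (RtoC e * w + 1)%C) ->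
  forall w, S w -> Cmod w <= / h \/ cone_region a w.
Proof.
  intros Hd Hh Had Hfar w Hw.
  destruct (Rle_or_lt (Cmod w) (/ h)) as [Hsmall | Hbig]; [left; exact Hsmall | right].
  assert (Hw0 : 0 < Cmod w) by (pose proof (Rinv_0_lt_compat h Hh); lra).
  set (e := / Cmod w).
  assert (He : 0 < e < h).
  { split; [apply Rinv_0_lt_compat; exact Hw0 |].
    rewrite <- (Rinv_inv h). apply Rinv_lt_contravar; [| exact Hbig].
    apply Rmult_lt_0_compat; [apply Rinv_0_lt_compat |]; lra. }
  replace w with (RtoC (Cmod w) * (RtoC e * w))%C
    by (rewrite Cmult_assoc, <- RtoC_mult; unfold e; rewrite Rinv_r, Cmult_1_l by lra; reflexivity).
  apply cone_region_scale; [exact Hw0 |].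
  destruct (Hfar w e Hw He) as (Hi & Hmi & Hm1).
  apply (cone_region_of_unit _ d); auto.
  rewrite Cmod_mult, Cmod_R, Rabs_pos_eq by lra. unfold e. apply Rinv_l. lra.
Qed.

Lemma eventually_cone_region (S : C -> Prop) :
  ~ approx_direction S Ci -> ~ approx_direction S (- Ci)%C ->
  ~ approx_direction S (- 1)%C ->
  exists rho a, 0 < rho /\ 1 < a /\ forall w, S w -> Cmod w <= rho \/ cone_region a w.
Proof.
  intros Hi Hmi Hm1.
  destruct (not_approx_direction_far _ _ Hi) as (d1 & h1 & Hd1 & Hh1 & Far1).
  destruct (not_approx_direction_far _ _ Hmi) as (d2 & h2 & Hd2 & Hh2 & Far2).
  destruct (not_approx_direction_far _ _ Hm1) as (d3 & h3 & Hd3 & Hh3 & Far3).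
  set (d := Rmin d1 (Rmin d2 d3)). set (h := Rmin h1 (Rmin h2 h3)).
  assert (Hd : 0 < d) by (repeat apply Rmin_pos; lra).
  assert (Hh : 0 < h) by (repeat apply Rmin_pos; lra).
  assert (Hdj : d <= d1 /\ d <= d2 /\ d <= d3).
  { unfold d. pose proof (Rmin_l d1 (Rmin d2 d3)). pose proof (Rmin_r d1 (Rmin d2 d3)).
    pose proof (Rmin_l d2 d3). pose proof (Rmin_r d2 d3). lra. }
  assert (Hhj : h <= h1 /\ h <= h2 /\ h <= h3).
  { unfold h. pose proof (Rmin_l h1 (Rmin h2 h3)). pose proof (Rmin_r h1 (Rmin h2 h3)).
    pose proof (Rmin_l h2 h3). pose proof (Rmin_r h2 h3). lra. }
  assert (Hinv_d : 0 < 2 / d) by (apply Rdiv_lt_0_compat; lra).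
  exists (/ h), (2 / d + 2).
  split; [apply Rinv_0_lt_compat; exact Hh | split; [lra |]].
  apply (cone_region_outside_disc S _ d h Hd Hh).
  { replace ((2 / d + 2) * d) with (2 + 2 * d) by (field; lra). lra. }
  intros w e Hw He.
  specialize (Far1 w e Hw ltac:(lra)). specialize (Far2 w e Hw ltac:(lra)).
  specialize (Far3 w e Hw ltac:(lra)).
  replace (RtoC e * w + Ci)%C with (RtoC e * w - - Ci)%C by ring.
  replace (RtoC e * w + 1)%C with (RtoC e * w - - 1)%C by ring.
  lra.
Qed.

Lemma approx_direction_image_rotate (g : C -> C) (r z : C) :
  Cmod r = 1 ->
  approx_direction (image (fun p => r * g p)%C) (r * z)%C -> approx_direction (image g) z.
Proof.
  intros Hr H d h Hd Hh. destruct (H d h Hd Hh) as (w & e & [p <-] & He & Hc).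
  exists (g p), e. split; [exists p; reflexivity | split; [exact He |]].
  replace (RtoC e * (r * g p) - r * z)%C with (r * (RtoC e * g p - z))%C in Hc by ring.
  rewrite Cmod_mult, Hr, Rmult_1_l in Hc. exact Hc.
Qed.

Lemma cexpi_PI : cexpi PI = (- 1)%C.
Proof. unfold cexpi. rewrite cos_PI, sin_PI. reflexivity. Qed.

Lemma cexpi_PI2 : cexpi (PI / 2) = Ci.
Proof. unfold cexpi. rewrite cos_PI2, sin_PI2. reflexivity. Qed.

Lemma cexpi_add_PI (t : R) : cexpi (t + PI) = (- cexpi t)%C.
Proof. unfold cexpi. rewrite neg_cos, neg_sin. reflexivity. Qed.

Lemma exists_angle_mod_2PI (t : R) : exists theta, 0 <= theta < 2 * PI /\ cexpi theta = cexpi t.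
Proof.
  pose proof (COS_bound t) as Hb. pose proof (acos_bound (cos t)) as Ha. pose proof PI_RGT_0.
  assert (Hsin : sin (acos (cos t)) = Rabs (sin t))
    by (rewrite sin_acos, Rtrigo_facts.sin_cos_Rabs by lra; reflexivity).
  unfold cexpi. destruct (Rle_or_lt 0 (sin t)) as [Hs | Hs].
  - exists (acos (cos t)). split; [lra |].
    rewrite cos_acos, Hsin, Rabs_pos_eq by lra. reflexivity.
  - exists (2 * PI - acos (cos t)). split.
    + assert (Hpos : 0 < acos (cos t)).
      { destruct (proj1 Ha) as [Hlt | H0]; [exact Hlt | exfalso].
        assert (Hc1 : cos t = 1) by (rewrite <- (cos_acos (cos t)), <- H0 by lra; apply cos_0).
        pose proof (sin2_cos2 t) as H1. unfold Rsqr in H1. nra. }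
      lra.
    + rewrite cos_minus, sin_minus, cos_2PI, sin_2PI, cos_acos, Hsin, Rabs_left by lra.
      f_equal; ring.
Qed.

Theorem corollary3 (g : C -> C) :
  harmonic_map g ->
  ~ (exists z : C, asymptotic_direction (image g) z /\
                   asymptotic_direction (image g) (Copp z)) ->
  exists (theta rho a : R),
    0 <= theta < 2 * PI /\ 0 < rho /\ 1 < a /\
    forall w : C, image (fun z => Cmult (cexpi theta) (g z)) w ->
      Cmod w <= rho \/
      (Rabs (Im w) <= a * Rabs (Re w) /\ ~ (Rabs (Im w) <= - (1 / a) * Re w)).
Proof.
  intros _ Hanti.
  set (Q := fun t => approx_direction (image g) (cexpi t)).
  assert (Hper : forall t, Q (t + 2 * PI) <-> Q t).
  { intros t. unfold Q. replace (t + 2 * PI) with (t + PI + PI) by ring.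
    rewrite !cexpi_add_PI. replace (- - cexpi t)%C with (cexpi t) by ring. tauto. }
  assert (Hno_pair : forall t, ~ (Q t /\ Q (t + PI))).
  { intros t [Ht Htpi]. apply Hanti. exists (cexpi t).
    unfold Q in Htpi. rewrite cexpi_add_PI in Htpi.
    split; apply asymptotic_direction_of_approx; auto; [| rewrite Cmod_opp]; apply Cmod_cexpi. }
  destruct (exists_avoided_triple Q Hper (not_approx_direction_locally _) Hno_pair)
    as (t & Ht & Htpi & Hthalf).
  (* Rotating by [PI/2 - t] sends the avoided directions [t], [t + PI], [t + PI/2]
     to [i], [-i], [-1]. *)
  destruct (exists_angle_mod_2PI (PI / 2 - t)) as (theta & Htheta & Etheta).
  assert (Hrot : forall s, ~ Q s ->
    ~ approx_direction (image (fun p => cexpi theta * g p)%C) (cexpi (PI / 2 - t + s))).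
  { intros s Hs H. apply Hs, (approx_direction_image_rotate g (cexpi theta)).
    - apply Cmod_cexpi.
    - rewrite cexpi_add, <- Etheta in H. exact H. }
  destruct (eventually_cone_region (image (fun p => cexpi theta * g p)%C))
    as (rho & a & Hrho & Ha & Hreg).
  - rewrite <- cexpi_PI2. replace (PI / 2) with (PI / 2 - t + t) by ring. exact (Hrot t Ht).
  - rewrite <- cexpi_PI2, <- cexpi_add_PI.
    replace (PI / 2 + PI) with (PI / 2 - t + (t + PI)) by ring. exact (Hrot _ Htpi).
  - rewrite <- cexpi_PI. replace PI with (PI / 2 - t + (t + PI / 2)) at 1 by field.
    exact (Hrot _ Hthalf).
  - exists theta, rho, a. auto.
Qed.
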